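(* Let $k\ge2$, let $\chi_1,\chi_2$ be primitive non-trivial Dirichlet characters with conductors $q_1,q_2$ and $\chi_1\chi_2(-1)=(-1)^k$. For all $n\in\mathbb Z$ and $\mathfrak a\in(\Gamma_0(q_1q_2))(\infty)$, $\widehat S_{\chi_1,\chi_2,k}(\mathfrak a+n)=\widehat S_{\chi_1,\chi_2,k}(\mathfrak a)$ (with $\infty+n=\infty$).
   Context: Notation: $e(z)=\exp(2\pi iz)$, $\tau(\chi)$ the Gauss sum. $E_{\chi_1,\chi_2,k}(z)=2\sum_{N\ge1}\sum_{A\mid N}\chi_1(A)\overline{\chi_2}(N/A)(N/A)^{k-1}e(Nz)$ on the upper half plane; $P_{k-2}(z;X,Y)=(Xz+Y)^{k-2}$. $(\Gamma_0(q_1q_2))(\infty)=\{\gamma\infty:\gamma\in\Gamma_0(q_1q_2)\}$. $\widehat S_{\chi_1,\chi_2,k}(\infty)=0$ and for $\mathfrak a\ne\infty$, $\widehat S_{\chi_1,\chi_2,k}(\mathfrak a)=(-1)^k\tau(\overline{\chi_1})(k-1)\int_\infty^{\mathfrak a}E_{\chi_1,\chi_2,k}(z)P_{k-2}(z;1,-\mathfrak a)dz$. *)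

(* concrete reals R, Coquelicot's complex numbers C = R * R,
   Coquelicot's Series / RInt_gen (applied componentwise, since C is not a
   complete normed R-module in Coquelicot). *)
From Stdlib Require Import Reals ZArith Arith Bool.
From Coquelicot Require Import Coquelicot.
Open Scope R_scope.

(* e(z) = exp(2 pi i z) for z : C *)
Definition e (z : C) : C :=
  Cmult (RtoC (exp (- (2 * PI * Im z))))
        (cos (2 * PI * Re z), sin (2 * PI * Re z)).

Definition Cseries (a : nat -> C) : C :=
  (Series (fun n => Re (a n)), Series (fun n => Im (a n))).

Definition CInt_0_inf (g : R -> C) : C :=
  (RInt_gen (fun t => Re (g t)) (at_right 0) (Rbar_locally p_infty),
   RInt_gen (fun t => Im (g t)) (at_right 0) (Rbar_locally p_infty)).

Definition dirichlet_char (q : nat) (chi : Z -> C) : Prop :=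
  (0 < q)%nat /\
  chi 1%Z = RtoC 1 /\
  (forall m n : Z, chi (m * n)%Z = Cmult (chi m) (chi n)) /\
  (forall n : Z, chi (n + Z.of_nat q)%Z = chi n) /\
  (forall n : Z, chi n = RtoC 0 <-> Z.gcd n (Z.of_nat q) <> 1%Z).

Definition primitive_char (q : nat) (chi : Z -> C) : Prop :=
  dirichlet_char q chi /\
  ~ (exists d : nat, Nat.divide d q /\ (d < q)%nat /\
       forall a : Z, Z.gcd a (Z.of_nat q) = 1%Z ->
         Z.modulo a (Z.of_nat d) = Z.modulo 1 (Z.of_nat d) -> chi a = RtoC 1).

Definition nontrivial_char (chi : Z -> C) : Prop :=
  exists n : Z, chi n <> RtoC 0 /\ chi n <> RtoC 1.

Definition conj_char (chi : Z -> C) : Z -> C := fun n => Cconj (chi n).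

Definition gauss_sum (q : nat) (chi : Z -> C) : C :=
  sum_n (fun a : nat =>
           Cmult (chi (Z.of_nat a)) (e (RtoC (INR a / INR q)))) (q - 1).

Definition eis_coef (chi1 chi2 : Z -> C) (k N : nat) : C :=
  sum_n (fun A : nat =>
           if (0 <? A)%nat && (N mod A =? 0)%nat then
             Cmult (Cmult (chi1 (Z.of_nat A)) (Cconj (chi2 (Z.of_nat (N / A)))))
                   (RtoC (INR (N / A) ^ (k - 1)))
           else RtoC 0) N.

Definition Eis (chi1 chi2 : Z -> C) (k : nat) (z : C) : C :=
  Cmult (RtoC 2)
    (Cseries (fun n : nat =>
       Cmult (eis_coef chi1 chi2 k (S n)) (e (Cmult (RtoC (INR (S n))) z)))).

Definition Ppoly (k : nat) (z X Y : C) : C := Cpow (Cplus (Cmult X z) Y) (k - 2).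

(* Cusps: points of P^1(Q) inside C u {oo}; None stands for oo *)
Definition cusp := option R.

(* int_oo^a f(z) dz along the vertical path z = a + i t, t from +oo to 0:
   equals - i * int_0^oo f(a + i t) dt *)
Definition int_inf_to (a : R) (f : C -> C) : C :=
  Cmult (Copp Ci) (CInt_0_inf (fun t => f (RtoC a + Cmult Ci (RtoC t))%C)).

(* \hat S_{chi1,chi2,k}(a); q1 is the conductor of chi1 (for the Gauss sum) *)
Definition Shat (q1 : nat) (chi1 chi2 : Z -> C) (k : nat) (a : cusp) : C :=
  match a with
  | None => RtoC 0
  | Some x =>
      Cmult (Cmult (Cmult (RtoC ((-1) ^ k)) (gauss_sum q1 (conj_char chi1)))
                   (RtoC (INR k - 1)))
            (int_inf_to x (fun z => Cmult (Eis chi1 chi2 k z)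
                                          (Ppoly k z (RtoC 1) (Copp (RtoC x)))))
  end.

Definition in_Gamma0_orbit_inf (N : Z) (a : cusp) : Prop :=
  exists aa bb cc dd : Z,
    (aa * dd - bb * cc)%Z = 1%Z /\ Z.divide N cc /\
    (if Z.eqb cc 0 then a = None else a = Some (IZR aa / IZR cc)).

Definition cusp_shift (a : cusp) (n : Z) : cusp :=
  match a with
  | None => None
  | Some x => Some (x + IZR n)
  end.

(* The Eisenstein series is 1-periodic, since e(N(z + n)) = e(Nz) for integers N and n, and the
   factor P_{k-2}(z; 1, -a) = (z - a)^(k-2) only depends on z - a.  Hence the substitution
   z -> z + n carries the vertical path from oo to a onto the one from oo to a + n without
   changing the integrand. *)
From Stdlib Require Import Reals ZArith Lia FunctionalExtensionality.
From Coquelicot Require Import Coquelicot.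
Open Scope R_scope.

Lemma cos_periodZ (x : R) (m : Z) : cos (x + 2 * IZR m * PI) = cos x.
Proof.
  destruct (Z.le_ge_cases 0 m) as [Hm | Hm].
  - rewrite <- (Z2Nat.id m Hm), <- INR_IZR_INZ. apply cos_period.
  - rewrite <- (cos_period _ (Z.to_nat (- m))), INR_IZR_INZ, Z2Nat.id, opp_IZR by lia.
    f_equal; ring.
Qed.

Lemma sin_periodZ (x : R) (m : Z) : sin (x + 2 * IZR m * PI) = sin x.
Proof.
  destruct (Z.le_ge_cases 0 m) as [Hm | Hm].
  - rewrite <- (Z2Nat.id m Hm), <- INR_IZR_INZ. apply sin_period.
  - rewrite <- (sin_period _ (Z.to_nat (- m))), INR_IZR_INZ, Z2Nat.id, opp_IZR by lia.
    f_equal; ring.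
Qed.

Lemma e_periodic (z : C) (m : Z) : e (z + RtoC (IZR m))%C = e z.
Proof.
  destruct z as [x y]. unfold e; simpl.
  replace (y + 0) with y by ring.
  replace (2 * PI * (x + IZR m)) with (2 * PI * x + 2 * IZR m * PI) by ring.
  now rewrite cos_periodZ, sin_periodZ.
Qed.

Lemma Eis_periodic (chi1 chi2 : Z -> C) (k : nat) (z : C) (n : Z) :
  Eis chi1 chi2 k (z + RtoC (IZR n))%C = Eis chi1 chi2 k z.
Proof.
  unfold Eis. do 2 f_equal. apply functional_extensionality; intro N.
  assert (HNn : (RtoC (INR (S N)) * (z + RtoC (IZR n)))%C
                = (RtoC (INR (S N)) * z + RtoC (IZR (Z.of_nat (S N) * n)))%C).
  { rewrite mult_IZR, <- INR_IZR_INZ, Cmult_plus_distr_l.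
    unfold RtoC, Cmult; simpl. f_equal; f_equal; ring. }
  now rewrite HNn, e_periodic.
Qed.

Lemma Ppoly_translate (k : nat) (z a c : C) :
  Ppoly k (z + c)%C (RtoC 1) (Copp (a + c)%C) = Ppoly k z (RtoC 1) (Copp a).
Proof. unfold Ppoly. f_equal. ring. Qed.

Lemma int_inf_to_translate (a c : R) (f : C -> C) :
  int_inf_to (a + c) f = int_inf_to a (fun z => f (z + RtoC c)%C).
Proof.
  unfold int_inf_to. do 2 f_equal. apply functional_extensionality; intro t.
  f_equal. unfold RtoC, Cplus; simpl. f_equal; ring.
Qed.

Lemma Shat_cusp_shift (q1 : nat) (chi1 chi2 : Z -> C) (k : nat) (a : cusp) (n : Z) :
  Shat q1 chi1 chi2 k (cusp_shift a n) = Shat q1 chi1 chi2 k a.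
Proof.
  destruct a as [x |]; [| reflexivity]. simpl.
  rewrite int_inf_to_translate. do 2 f_equal. apply functional_extensionality; intro z.
  replace (RtoC (x + IZR n)) with (RtoC x + RtoC (IZR n))%C
    by (unfold RtoC, Cplus; simpl; f_equal; ring).
  now rewrite Eis_periodic, Ppoly_translate.
Qed.

Theorem corollary5p4 (k q1 q2 : nat) (chi1 chi2 : Z -> C) :
  (2 <= k)%nat ->
  primitive_char q1 chi1 -> nontrivial_char chi1 ->
  primitive_char q2 chi2 -> nontrivial_char chi2 ->
  Cmult (chi1 (-1)%Z) (chi2 (-1)%Z) = RtoC ((-1) ^ k) ->
  forall (n : Z) (a : cusp),
    in_Gamma0_orbit_inf (Z.of_nat (q1 * q2)) a ->
    Shat q1 chi1 chi2 k (cusp_shift a n) = Shat q1 chi1 chi2 k a.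
Proof.
  intros _ _ _ _ _ _ n a _. apply Shat_cusp_shift.
Qed.
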